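(* Let $k\ge 2$ be an integer, let $N\ge 2k-1$ be an integer, and let $\tau\colon\{0,1\}^*\to\{0,1,\#\}^*$ be the $N$-uniform substitution defined by $\tau(0)=\#0^{k-2}0^{N-2k+2}0^{k-1}$ and $\tau(1)=\#0^{k-2}1^{N-2k+2}0^{k-1}$. Let $\mathbf{w}$ be an infinite binary word. If $u_0\cdots u_{e-1}$ with $e\ge N$ is a $k$-abelian power occurring in $\tau(\mathbf{w})$, then $N$ divides $|u_0|$.
   Context: For finite words $u,x$, $|u|_x$ denotes the number of occurrences of $x$ as a factor of $u$. Two finite words $u,v$ are $k$-abelian equivalent, written $u\sim_k v$, if $|u|_x=|v|_x$ for every nonempty word $x$ of length at most $k$. A $k$-abelian power of exponent $e$ (a positive integer) and period $m$ is a nonempty word $u_0\cdots u_{e-1}$ with $|u_0|=m$ and $u_0\sim_k\cdots\sim_k u_{e-1}$. The image $\tau(\mathbf{w})$ of an infinite word is obtained by applying $\tau$ letter by letter. *)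

From mathcomp Require Import all_boot.
Set Implicit Arguments. Unset Strict Implicit. Unset Printing Implicit Defensive.

(* Alphabet {0,1,#}: Some false = 0, Some true = 1, None = #. *)
Definition letter := option bool.
Definition word := seq letter.

Definition occ (x u : word) : nat :=
  count (fun i => take (size x) (drop i u) == x) (iota 0 (size u).+1).

Definition kab_equiv (k : nat) (u v : word) : Prop :=
  forall x : word, 0 < size x <= k -> occ x u = occ x v.

(* k-abelian power of exponent e and period m: the word flatten us,
   us = [u_0; ...; u_{e-1}], nonempty, |u_0| = m, u_0 ~k ... ~k u_{e-1}. *)
Definition kab_power (k e m : nat) (us : seq word) : Prop :=
  [/\ 0 < e, size us = e, flatten us != [::],
      size (nth [::] us 0) = m &
      forall i, i.+1 < e -> kab_equiv k (nth [::] us i) (nth [::] us i.+1)].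

Definition tau (k N : nat) (b : bool) : word :=
  None :: nseq (k - 2) (Some false) ++ nseq (N - 2 * k + 2) (Some b)
       ++ nseq (k - 1) (Some false).

Definition tau_inf (k N : nat) (w : nat -> bool) (n : nat) : letter :=
  nth None (tau k N (w (n %/ N))) (n %% N).

Definition occurs_in (u : word) (z : nat -> letter) : Prop :=
  exists p, u = mkseq (fun i => z (p + i)) (size u).

From mathcomp Require Import all_boot zify.

(* A k-abelian equivalence with k >= 1 preserves the number of occurrences of each
   letter, so the blocks u_0, ..., u_{e-1} are permutations of one another: each has
   length m and contains the same number c of #'s. In tau(w) the letter # sits exactly
   at the positions divisible by N, so every factor of length qN contains exactly q #'s.
   The first N blocks form a factor of length Nm, whence m = Nc. *)

Set Implicit Arguments.
Unset Strict Implicit.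
Unset Printing Implicit Defensive.

Lemma occ_seq1 (a : letter) (u : word) : occ [:: a] u = count_mem a u.
Proof.
rewrite /occ -addn1 iotaD count_cat /= drop_size /= -[count_mem a u]addn0.
congr (_ + _); rewrite -[in RHS](mkseq_nth None u) /mkseq count_map.
apply: eq_in_count => i; rewrite mem_iota /= => lt_i_u.
by rewrite (drop_nth None lt_i_u) /= take0 eqseq_cons andbT.
Qed.

Lemma kab_equiv_perm (k : nat) (u v : word) :
  0 < k -> kab_equiv k u v -> perm_eq u v.
Proof.
move=> k_gt0 uv; apply/allP => a _ /=.
by rewrite -!occ_seq1 uv.
Qed.

Lemma kab_power_perm (k e m : nat) (us : seq word) :
  0 < k -> kab_power k e m us -> all (perm_eq (nth [::] us 0)) us.
Proof.
move=> k_gt0 [_ <- _ _ equiv_next]; apply/(all_nthP [::]) => i.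
elim: i => [|i IHi] lt_i_us; first exact: perm_refl.
apply: perm_trans (IHi (ltnW lt_i_us)) _.
exact: kab_equiv_perm (equiv_next i lt_i_us).
Qed.

Lemma count_flatten_perm (T : eqType) (a : pred T) (u : seq T) (s : seq (seq T)) :
  all (perm_eq u) s -> count a (flatten s) = size s * count a u.
Proof.
elim: s => [|v s IHs] //= /andP[uv /IHs]; rewrite count_cat => ->.
by rewrite (permP uv) mulSn.
Qed.

Lemma occurs_in_catl (s t : word) (z : nat -> letter) :
  occurs_in (s ++ t) z -> occurs_in s z.
Proof.
case=> p st; exists p; move/(congr1 (take (size s))): st.
by rewrite take_size_cat // -map_take take_iota size_cat (minn_idPl (leq_addr _ _)).
Qed.

Lemma count_dvdn_iota_period (d p : nat) : 0 < d -> count (dvdn d) (iota p d) = 1.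
Proof.
case: d => // d _; elim: p => [|p IHp].
  rewrite /= add1n (@eq_in_count _ _ pred0) ?count_pred0 // => i.
  by rewrite mem_iota => /andP[i_gt0 lt_i_d] /=; rewrite gtnNdvd.
rewrite -[X in iota _ X]addn1 iotaD count_cat /= addSnnS (dvdn_addl _ (dvdnn _)) addn0.
by rewrite addnC -IHp.
Qed.

Lemma count_dvdn_iota (d p q : nat) : 0 < d -> count (dvdn d) (iota p (q * d)) = q.
Proof.
move=> d_gt0; elim: q p => [|q IHq] p //.
by rewrite mulSn iotaD count_cat count_dvdn_iota_period // IHq.
Qed.

(* The bound makes the truncated subtractions in [tau] harmless: [tau k N b] then
   has at least [N] letters, and [#] only as its first one. *)
Lemma tau_inf_hash (k N : nat) (w : nat -> bool) (n : nat) :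
  0 < N -> 2 * k <= N + 2 -> (tau_inf k N w n == None) = (N %| n).
Proof.
move=> N_gt0 le_2k_N; rewrite /tau_inf /dvdn.
case: (n %% N) (ltn_pmod n N_gt0) => [|i] lt_i_N //=; apply/negbTE/eqP.
set body := _ ++ _; have lt_i_body : i < size body by rewrite !size_cat !size_nseq; lia.
by move=> body_i; have := mem_nth None lt_i_body; rewrite body_i !mem_cat !mem_nseq !andbF.
Qed.

Lemma count_hash_tau_inf_factor (k N q : nat) (w : nat -> bool) (u : word) :
  0 < N -> 2 * k <= N + 2 -> occurs_in u (tau_inf k N w) ->
  size u = q * N -> count_mem None u = q.
Proof.
move=> N_gt0 le_2k_N [p ->]; rewrite size_mkseq => size_u; rewrite /mkseq count_map size_u.
rewrite -[RHS](@count_dvdn_iota N p q) // -[p in RHS]addn0 iotaDl count_map.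
by apply: eq_count => i /=; rewrite tau_inf_hash.
Qed.

Theorem lemma5 (k N : nat) (w : nat -> bool) (e m : nat) (us : seq word) :
  2 <= k -> 2 * k - 1 <= N ->
  N <= e -> kab_power k e m us ->
  occurs_in (flatten us) (tau_inf k N w) ->
  N %| m.
Proof.
move=> le2k le_k_N le_N_e pow occ_us; have N_gt0 : 0 < N by lia.
have [_ size_us _ size_u0 _] := pow.
have blocks_perm := kab_power_perm (ltnW le2k) pow.
set v := flatten (take N us).
have occ_v : occurs_in v (tau_inf k N w).
  by apply: (@occurs_in_catl _ (flatten (drop N us))); rewrite -flatten_cat cat_take_drop.
have first_perm : all (perm_eq (nth [::] us 0)) (take N us).
  by apply/allP => x /mem_take; apply: (allP blocks_perm).
have size_take_us : size (take N us) = N by rewrite size_takel // size_us.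
have size_v : size v = m * N.
  by rewrite -count_predT (count_flatten_perm _ first_perm) count_predT size_u0 size_take_us mulnC.
have hash_v : count_mem None v = m by apply: count_hash_tau_inf_factor occ_v size_v => //; lia.
by rewrite -hash_v (count_flatten_perm _ first_perm) size_take_us dvdn_mulr.
Qed.
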